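(* Protocol $\Pi_{4PC}$ (described in the context) is correct: for every wire of the circuit, the parties hold a $[\![\cdot]\!]$-sharing of the value carried by that wire when the circuit is evaluated on the parties' inputs, so that the values reconstructed at the output wires equal the outputs of the circuit on those inputs.
   Context: Four parties $P_0,P_1,P_2,P_3$ are connected by pairwise private and authentic channels in a synchronous network. The function is given as a publicly known circuit over the ring $\mathbb{Z}_{2^\ell}$ made of 2-input addition and multiplication gates. Parties have pre-shared PRF keys for every subset of parties, so any subset can non-interactively sample common random values; $H$ is a collision-resistant hash function. Sharings over $\mathbb{Z}_{2^\ell}$: a value $v$ is $\langle\cdot\rangle$-shared among $P_1,P_2,P_3$ if $v=v_1+v_2+v_3$ and $P_1$ holds $(v_2,v_3)$, $P_2$ holds $(v_3,v_1)$, $P_3$ holds $(v_1,v_2)$. A value $v$ is $[\![\cdot]\!]$-shared if there are $\lambda_v,m_v$ with $m_v=v+\lambda_v$, $P_1,P_2,P_3$ all know $m_v$, $\lambda_v=\lambda_{v,1}+\lambda_{v,2}+\lambda_{v,3}$ is $\langle\cdot\rangle$-shared among $P_1,P_2,P_3$, and $P_0$ knows $\lambda_{v,1},\lambda_{v,2},\lambda_{v,3}$. Protocol $\Pi_{4PC}$: (1) Input sharing: for an input $v$ of party $P_i$, offline the $\lambda_{v,j}$ are sampled non-interactively so that $\lambda_{v,j}$ is known to all parties except $P_j$ ($j\in\{1,2,3\}$), and additionally known to $P_i$ (if $P_i=P_k$, $k\in\{1,2,3\}$, $\lambda_{v,k}$ is sampled by all four parties); online $P_i$ sends $m_v=v+\lambda_v$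 to $P_1,P_2,P_3$, who exchange $H(m_v)$ and abort on mismatch. (2) Addition gates are evaluated locally by linearity. (3) Multiplication gate $z=xy$: offline, $\lambda_{z,j}$ is sampled by all parties but $P_j$; the parties obtain $A,B,\Gamma$ with $A+B+\Gamma=0$, where $P_0,P_1$ know $A$, $P_0,P_2$ know $B$, $P_0,P_3$ know $\Gamma$; $P_0,P_1$ compute $\gamma_2=\lambda_{x,2}\lambda_{y,2}+\lambda_{x,2}\lambda_{y,3}+\lambda_{x,3}\lambda_{y,2}+A$, $P_0,P_2$ compute $\gamma_3=\lambda_{x,3}\lambda_{y,3}+\lambda_{x,3}\lambda_{y,1}+\lambda_{x,1}\lambda_{y,3}+B$, $P_0,P_3$ compute $\gamma_1=\lambda_{x,1}\lambda_{y,1}+\lambda_{x,1}\lambda_{y,2}+\lambda_{x,2}\lambda_{y,1}+\Gamma$; $P_1$ receives $\gamma_3$ from $P_2$ and $H(\gamma_3)$ from $P_0$, $P_2$ receives $\gamma_1$ from $P_3$ and $H(\gamma_1)$ from $P_0$, $P_3$ receives $\gamma_2$ from $P_1$ and $H(\gamma_2)$ from $P_0$, aborting on inconsistency. Online, $P_1,P_3$ compute $m'_2=-\lambda_{x,2}m_y-\lambda_{y,2}m_x+\gamma_2+\lambda_{z,2}$, $P_2,P_1$ compute $m'_3=-\lambda_{x,3}m_y-\lambda_{y,3}m_x+\gamma_3+\lambda_{z,3}$, $P_3,P_2$ compute $m'_1=-\lambda_{x,1}m_y-\lambda_{y,1}m_x+\gamma_1+\lambda_{z,1}$; $P_1$ receives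 $m'_1$ from $P_2$ and $H(m'_1)$ from $P_3$, $P_2$ receives $m'_2$ from $P_3$ and $H(m'_2)$ from $P_1$, $P_3$ receives $m'_3$ from $P_1$ and $H(m'_3)$ from $P_2$; they abort on inconsistency, else set $m_z=m'_1+m'_2+m'_3+m_xm_y$. (4) Output reconstruction of $v$: $P_1$ receives $\lambda_{v,1}$ from $P_2$ and its hash from $P_0$; $P_2$ receives $\lambda_{v,2}$ from $P_3$ and its hash from $P_0$; $P_3$ receives $\lambda_{v,3}$ from $P_1$ and its hash from $P_0$; $P_0$ receives $m_v$ from $P_1$ and its hash from $P_2$; each party aborts on inconsistency, else outputs $v=m_v-\lambda_{v,1}-\lambda_{v,2}-\lambda_{v,3}$. *)

(* Model of the four-party protocol Pi_4PC (honest execution). *)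
From HB Require Import structures.
From mathcomp Require Import all_boot all_algebra.
Set Implicit Arguments. Unset Strict Implicit. Unset Printing Implicit Defensive.
Import GRing.Theory.
Local Open Scope ring_scope.

(* Circuits.  Wires are numbered: input wires 0 .. n_in-1, then gate k *)
(* (0-based, in topological order) produces wire n_in + k.            *)
Inductive gate := GAdd of nat & nat | GMul of nat & nat.

Record circuit := Circuit {
  c_inputs  : seq 'I_4;   (* owner party P_i of each input wire *)
  c_gates   : seq gate;
  c_outputs : seq nat }.

Definition n_inputs (C : circuit) := size (c_inputs C).
Definition n_wires (C : circuit) := (size (c_inputs C) + size (c_gates C))%N.

Definition gate_wf (k : nat) (g : gate) : bool :=
  match g with GAdd a b | GMul a b => (a < k)%N && (b < k)%N end.

Definition circuit_wf (C : circuit) : bool :=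
  all (fun k => gate_wf (n_inputs C + k) (nth (GAdd 0 0) (c_gates C) k))
      (iota 0 (size (c_gates C)))
  && all (fun w => (w < n_wires C)%N) (c_outputs C).

Section Protocol.
Variable R : comNzRingType.

Definition gate_val (vals : seq R) (g : gate) : R :=
  match g with
  | GAdd a b => vals`_a + vals`_b
  | GMul a b => vals`_a * vals`_b
  end.

Fixpoint eval_gates (vals : seq R) (gs : seq gate) : seq R :=
  if gs is g :: gs' then eval_gates (rcons vals (gate_val vals g)) gs' else vals.

Definition wire_values (C : circuit) (inp : nat -> R) : seq R :=
  eval_gates (mkseq inp (n_inputs C)) (c_gates C).

Definition circuit_output (C : circuit) (inp : nat -> R) : seq R :=
  [seq (wire_values C inp)`_w | w <- c_outputs C].

Record view0 := View0 { v0_l1 : R; v0_l2 : R; v0_l3 : R }.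
(* P_k holds m and its two shares:
   P1: (lambda_2, lambda_3), P2: (lambda_3, lambda_1), P3: (lambda_1, lambda_2) *)
Record viewk := ViewK { vk_m : R; vk_a : R; vk_b : R }.
Record wstate := WState { ws0 : view0; ws1 : viewk; ws2 : viewk; ws3 : viewk }.

Definition wdefault : wstate :=
  WState (View0 0 0 0) (ViewK 0 0 0) (ViewK 0 0 0) (ViewK 0 0 0).

Definition tshared (v : R) (S : wstate) : Prop :=
  let: WState (View0 a1 a2 a3) P1 P2 P3 := S in
  [/\ vk_m P1 = vk_m P2, vk_m P2 = vk_m P3,
      (vk_a P1, vk_b P1) = (a2, a3) /\ (vk_a P2, vk_b P2) = (a3, a1),
      (vk_a P3, vk_b P3) = (a1, a2)
    & vk_m P1 = v + (a1 + a2 + a3)].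

(* Randomness: lam j w = lambda_{w,j} (PRF-sampled); A,B,G the offline
   correlated values of the multiplication gate with output wire w. *)
Variables (lam1 lam2 lam3 A B G : nat -> R).
Variables (hT : eqType) (H : R -> hT).

(* (1) input sharing of wire w with value x (owner computes m and sends
   it to P1,P2,P3, who exchange hashes of what they received) *)
Definition share_input (w : nat) (x : R) : wstate * bool :=
  let m := x + (lam1 w + lam2 w + lam3 w) in
  let m1 := m in let m2 := m in let m3 := m in (* copies received *)
  let ok := [&& H m1 == H m2, H m1 == H m3, H m2 == H m1,
                H m2 == H m3, H m3 == H m1 & H m3 == H m2] in
  (WState (View0 (lam1 w) (lam2 w) (lam3 w))
          (ViewK m1 (lam2 w) (lam3 w)) (ViewK m2 (lam3 w) (lam1 w))
          (ViewK m3 (lam1 w) (lam2 w)), ok).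

Definition add_views (X Y : wstate) : wstate :=
  let addk (u v : viewk) := ViewK (vk_m u + vk_m v) (vk_a u + vk_a v) (vk_b u + vk_b v) in
  WState (View0 (v0_l1 (ws0 X) + v0_l1 (ws0 Y)) (v0_l2 (ws0 X) + v0_l2 (ws0 Y))
                (v0_l3 (ws0 X) + v0_l3 (ws0 Y)))
         (addk (ws1 X) (ws1 Y)) (addk (ws2 X) (ws2 Y)) (addk (ws3 X) (ws3 Y)).

Definition mul_views (z : nat) (X Y : wstate) : wstate * bool :=
  let: WState (View0 x1 x2 x3) X1 X2 X3 := X in
  let: WState (View0 y1 y2 y3) Y1 Y2 Y3 := Y in
  (* offline, P0's computations *)
  let g2_0 := x2 * y2 + x2 * y3 + x3 * y2 + A z in
  let g3_0 := x3 * y3 + x3 * y1 + x1 * y3 + B z in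
  let g1_0 := x1 * y1 + x1 * y2 + x2 * y1 + G z in
  (* P1 (shares l2,l3) computes gamma_2 *)
  let g2_1 := vk_a X1 * vk_a Y1 + vk_a X1 * vk_b Y1 + vk_b X1 * vk_a Y1 + A z in
  (* P2 (shares l3,l1) computes gamma_3 *)
  let g3_2 := vk_a X2 * vk_a Y2 + vk_a X2 * vk_b Y2 + vk_b X2 * vk_a Y2 + B z in
  (* P3 (shares l1,l2) computes gamma_1 *)
  let g1_3 := vk_a X3 * vk_a Y3 + vk_a X3 * vk_b Y3 + vk_b X3 * vk_a Y3 + G z in
  (* P1 gets gamma_3 from P2, P2 gets gamma_1 from P3, P3 gets gamma_2 from P1;
     hashes from P0 *)
  let ok_off := [&& H g3_2 == H g3_0, H g1_3 == H g1_0 & H g2_1 == H g2_0] in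
  (* online *)
  let m'2_1 := - vk_a X1 * vk_m Y1 - vk_a Y1 * vk_m X1 + g2_1 + lam2 z in
  let m'2_3 := - vk_b X3 * vk_m Y3 - vk_b Y3 * vk_m X3 + g2_1 + lam2 z in
  let m'3_2 := - vk_a X2 * vk_m Y2 - vk_a Y2 * vk_m X2 + g3_2 + lam3 z in
  let m'3_1 := - vk_b X1 * vk_m Y1 - vk_b Y1 * vk_m X1 + g3_2 + lam3 z in
  let m'1_3 := - vk_a X3 * vk_m Y3 - vk_a Y3 * vk_m X3 + g1_3 + lam1 z in
  let m'1_2 := - vk_b X2 * vk_m Y2 - vk_b Y2 * vk_m X2 + g1_3 + lam1 z in
  (* P1 gets m'_1 from P2 and H(m'_1) from P3; P2 gets m'_2 from P3 and
     H(m'_2) from P1; P3 gets m'_3 from P1 and H(m'_3) from P2 *)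
  let ok_on := [&& H m'1_2 == H m'1_3, H m'2_3 == H m'2_1 & H m'3_1 == H m'3_2] in
  let mz1 := m'1_2 + m'2_1 + m'3_1 + vk_m X1 * vk_m Y1 in
  let mz2 := m'1_2 + m'2_3 + m'3_2 + vk_m X2 * vk_m Y2 in
  let mz3 := m'1_3 + m'2_3 + m'3_1 + vk_m X3 * vk_m Y3 in
  (WState (View0 (lam1 z) (lam2 z) (lam3 z))
          (ViewK mz1 (lam2 z) (lam3 z)) (ViewK mz2 (lam3 z) (lam1 z))
          (ViewK mz3 (lam1 z) (lam2 z)), ok_off && ok_on).

Definition gate_step (sts : seq wstate) (g : gate) : wstate * bool :=
  match g with
  | GAdd a b => (add_views (nth wdefault sts a) (nth wdefault sts b), true)
  | GMul a b => mul_views (size sts) (nth wdefault sts a) (nth wdefault sts b)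
  end.

Fixpoint run_gates (sts : seq wstate) (ok : bool) (gs : seq gate)
  : seq wstate * bool :=
  if gs is g :: gs' then
    let: (St, okg) := gate_step sts g in run_gates (rcons sts St) (ok && okg) gs'
  else (sts, ok).

(* (4) output reconstruction of one wire: returns the four parties'
   outputs (P0,P1,P2,P3) and whether all checks passed *)
Definition reconstruct (S : wstate) : (R * R * R * R) * bool :=
  let: WState (View0 a1 a2 a3) P1 P2 P3 := S in
  let r1 := vk_b P2 in (* lambda_1 from P2, hash from P0 *)
  let r2 := vk_b P3 in (* lambda_2 from P3 *)
  let r3 := vk_b P1 in (* lambda_3 from P1 *)
  let r0 := vk_m P1 in (* m from P1, hash from P2 *)
  let ok := [&& H r1 == H a1, H r2 == H a2, H r3 == H a3 & H r0 == H (vk_m P2)] in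
  ((r0 - a1 - a2 - a3,
    vk_m P1 - r1 - vk_a P1 - vk_b P1,
    vk_m P2 - vk_b P2 - r2 - vk_a P2,
    vk_m P3 - vk_a P3 - vk_b P3 - r3), ok).

Record result := Result {
  res_ok : bool;                 (* no party aborted *)
  res_states : seq wstate;
  res_out : 'I_4 -> seq R }.

Definition run_protocol (C : circuit) (inp : nat -> R) : result :=
  let init := [seq share_input w (inp w) | w <- iota 0 (n_inputs C)] in
  let: (sts, ok) := run_gates (map fst init) (all snd init) (c_gates C) in
  let outs := [seq reconstruct (nth wdefault sts w) | w <- c_outputs C] in
  let pick (i : 'I_4) (o : R * R * R * R) :=
    let: (o0, o1, o2, o3) := o in
    match val i with 0 => o0 | 1 => o1 | 2 => o2 | _ => o3 end in
  Result (ok && all snd outs) sts (fun i => [seq pick i o.1 | o <- outs]).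

End Protocol.

(* In an honest run the views of every wire have the canonical shape fixed by
   the wire value v and the masks λ1, λ2, λ3: P0 holds all masks, P_k the two
   masks other than λ_k, and P1, P2, P3 the common masked value v + λ1 + λ2 + λ3.
   Input sharing creates this shape and addition preserves it by linearity.
   For multiplication, γ1 + γ2 + γ3 = λx λy because A + B + Γ = 0, hence
   m'1 + m'2 + m'3 + mx my = (x + λx)(y + λy) - λx my - λy mx + λx λy + λz
   = x y + λz.  Since honest parties always send the values the receivers
   compute themselves, every hash comparison succeeds, and reconstruction
   from a canonical sharing returns v to all four parties. *)
From mathcomp Require Import all_boot all_algebra.
From mathcomp Require Import ring.
Set Implicit Arguments. Unset Strict Implicit. Unset Printing Implicit Defensive.
Import GRing.Theory.
Local Open Scope ring_scope.

Section Correctness.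
Variable R : comNzRingType.
Variables (lam1 lam2 lam3 A B G : nat -> R).
Variables (hT : eqType) (H : R -> hT).

Definition tsharing (v l1 l2 l3 : R) : wstate R :=
  let m := v + (l1 + l2 + l3) in
  WState (View0 l1 l2 l3) (ViewK m l2 l3) (ViewK m l3 l1) (ViewK m l1 l2).

Lemma tsharedP v S : tshared v S -> exists l1 l2 l3, S = tsharing v l1 l2 l3.
Proof.
case: S => [[l1 l2 l3] [m1 p1 q1] [m2 p2 q2] [m3 p3 q3]] /=.
case=> /= e12 e23 [[-> ->] [-> ->]] [-> ->] e.
by exists l1, l2, l3; rewrite /tsharing -e23 -e12 e.
Qed.

Lemma share_input_tsharing w x :
  share_input lam1 lam2 lam3 H w x = (tsharing x (lam1 w) (lam2 w) (lam3 w), true).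
Proof. by rewrite /share_input /tsharing !eqxx. Qed.

Lemma add_views_tsharing x y a1 a2 a3 b1 b2 b3 :
  add_views (tsharing x a1 a2 a3) (tsharing y b1 b2 b3) =
  tsharing (x + y) (a1 + b1) (a2 + b2) (a3 + b3).
Proof.
rewrite /add_views /tsharing /=.
have -> : x + (a1 + a2 + a3) + (y + (b1 + b2 + b3)) =
          x + y + (a1 + b1 + (a2 + b2) + (a3 + b3)) by ring.
by [].
Qed.

Lemma mul_views_tsharing z x y a1 a2 a3 b1 b2 b3 :
  A z + B z + G z = 0 ->
  mul_views lam1 lam2 lam3 A B G H z (tsharing x a1 a2 a3) (tsharing y b1 b2 b3) =
  (tsharing (x * y) (lam1 z) (lam2 z) (lam3 z), true).
Proof.
move=> hABGz; have eGz : G z = - A z - B z.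
  by apply: (addrI (A z + B z)); rewrite hABGz; ring.
rewrite /mul_views /tsharing /= !eqxx /= eGz.
by congr (WState _ (ViewK _ _ _) (ViewK _ _ _) (ViewK _ _ _), _); ring.
Qed.

Lemma reconstruct_tsharing v l1 l2 l3 :
  reconstruct H (tsharing v l1 l2 l3) = ((v, v, v, v), true).
Proof. by rewrite /reconstruct /tsharing /= !eqxx; congr (_, _, _, _, _); ring. Qed.

Lemma reconstruct_tshared v S : tshared v S -> reconstruct H S = ((v, v, v, v), true).
Proof. by case/tsharedP=> l1 [l2 [l3 ->]]; apply: reconstruct_tsharing. Qed.

Fixpoint gates_wf (n : nat) (gs : seq gate) : bool :=
  if gs is g :: gs' then gate_wf n g && gates_wf n.+1 gs' else true.

Lemma gates_wf_nth n gs :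
  (forall k, (k < size gs)%N -> gate_wf (n + k) (nth (GAdd 0 0) gs k)) ->
  gates_wf n gs.
Proof.
elim: gs n => [|g gs IH] n //= wf_gs.
apply/andP; split; first by have := wf_gs 0%N isT; rewrite addn0.
by apply: IH => k lt_k; have := wf_gs k.+1 lt_k; rewrite addSnnS.
Qed.

Lemma circuit_wf_gates C : circuit_wf C -> gates_wf (n_inputs C) (c_gates C).
Proof.
case/andP=> /allP wf_gs _; apply: gates_wf_nth => k lt_k.
by apply: wf_gs; rewrite mem_iota.
Qed.

Definition tshared_seq (vals : seq R) (sts : seq (wstate R)) : Prop :=
  size sts = size vals /\
  forall w, (w < size vals)%N -> tshared vals`_w (nth (wdefault R) sts w).

Lemma tshared_seq_rcons vals sts v S :
  tshared_seq vals sts -> tshared v S -> tshared_seq (rcons vals v) (rcons sts S).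
Proof.
move=> [size_sts sh_sts] sh_S; split; first by rewrite !size_rcons size_sts.
move=> w; rewrite size_rcons ltnS leq_eqVlt => /orP [/eqP ->|lt_w].
  by rewrite !nth_rcons size_sts ltnn eqxx.
by rewrite !nth_rcons size_sts lt_w; apply: sh_sts.
Qed.

Lemma size_eval_gates (vals : seq R) gs :
  size (eval_gates vals gs) = (size vals + size gs)%N.
Proof.
elim: gs vals => [|g gs IH] vals /=; first by rewrite addn0.
by rewrite IH size_rcons addSnnS.
Qed.

Hypothesis hABG : forall w, A w + B w + G w = 0.

Lemma gate_step_tshared vals sts g :
  tshared_seq vals sts -> gate_wf (size vals) g ->
  exists2 S, gate_step lam1 lam2 lam3 A B G H sts g = (S, true)
           & tshared (gate_val vals g) S.
Proof.
move=> [_ sh_sts]; case: g => a b /andP [lt_a lt_b].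
- have [a1 [a2 [a3 ea]]] := tsharedP (sh_sts a lt_a).
  have [b1 [b2 [b3 eb]]] := tsharedP (sh_sts b lt_b).
  by eexists; first by rewrite /= ea eb add_views_tsharing.
- have [a1 [a2 [a3 ea]]] := tsharedP (sh_sts a lt_a).
  have [b1 [b2 [b3 eb]]] := tsharedP (sh_sts b lt_b).
  by eexists; first by rewrite /= ea eb mul_views_tsharing ?hABG.
Qed.

Lemma run_gates_tshared gs vals sts ok :
  tshared_seq vals sts -> gates_wf (size vals) gs ->
  let p := run_gates lam1 lam2 lam3 A B G H sts ok gs in
  p.2 = ok /\ tshared_seq (eval_gates vals gs) p.1.
Proof.
elim: gs vals sts ok => [|g gs IH] vals sts ok sh_sts //=.
case/andP=> wf_g wf_gs; have [S -> sh_g] := gate_step_tshared sh_sts wf_g.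
rewrite andbT; apply: IH; last by rewrite size_rcons.
exact: tshared_seq_rcons.
Qed.

Lemma share_inputs_tshared (n : nat) (inp : nat -> R) :
  let init := [seq share_input lam1 lam2 lam3 H w (inp w) | w <- iota 0 n] in
  all snd init /\ tshared_seq (mkseq inp n) (map fst init).
Proof.
have -> : [seq share_input lam1 lam2 lam3 H w (inp w) | w <- iota 0 n] =
          [seq (tsharing (inp w) (lam1 w) (lam2 w) (lam3 w), true) | w <- iota 0 n].
  by apply: eq_map => w; apply: share_input_tsharing.
split; first by rewrite all_map; apply/allP.
split=> [|w]; first by rewrite !size_map size_iota.
rewrite size_mkseq => lt_w; rewrite nth_mkseq // -map_comp.
by rewrite (nth_map 0%N) ?size_iota // nth_iota.
Qed.

Lemma run_protocol_correct (C : circuit) (inp : nat -> R) : circuit_wf C ->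
  let res := run_protocol lam1 lam2 lam3 A B G H C inp in
  [/\ res_ok res = true,
      (forall w, (w < n_wires C)%N ->
         tshared (wire_values C inp)`_w (nth (wdefault _) (res_states res) w))
    & forall i : 'I_4, res_out res i = circuit_output C inp].
Proof.
move=> wf_C; have /andP [_ /allP wf_out] := wf_C.
set init := [seq share_input lam1 lam2 lam3 H w (inp w) | w <- iota 0 (n_inputs C)].
have [init_ok sh_init] : all snd init /\ tshared_seq (mkseq inp (n_inputs C)) (map fst init)
  := share_inputs_tshared (n_inputs C) inp.
have wf_gs := circuit_wf_gates wf_C; rewrite -(size_mkseq inp (n_inputs C)) in wf_gs.
have := run_gates_tshared (all snd init) sh_init wf_gs.
rewrite /run_protocol -/init; case: run_gates => sts ok /= [-> [_ sh_sts]].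
have size_vals : size (wire_values C inp) = n_wires C.
  by rewrite size_eval_gates size_mkseq.
have out_rec w : w \in c_outputs C -> reconstruct H (nth (wdefault R) sts w) =
    let v := (wire_values C inp)`_w in ((v, v, v, v), true).
  by move=> w_out; apply/reconstruct_tshared/sh_sts; rewrite size_vals wf_out.
split.
- by rewrite init_ok all_map; apply/allP => w w_out /=; rewrite out_rec.
- by move=> w; rewrite -size_vals; apply: sh_sts.
- move=> i; rewrite /circuit_output -map_comp; apply/eq_in_map => w w_out /=.
  by rewrite out_rec //=; case: (val i) => [|[|[|]]].
Qed.

End Correctness.

Theorem theorem1 (l : nat) (hl : (0 < l)%N) (C : circuit) (hwf : circuit_wf C)
  (inp : nat -> 'Z_(2 ^ l)%N) (lam1 lam2 lam3 A B G : nat -> 'Z_(2 ^ l)%N)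
  (hABG : forall w, A w + B w + G w = 0)
  (hT : eqType) (H : 'Z_(2 ^ l)%N -> hT) :
  let res := run_protocol lam1 lam2 lam3 A B G H C inp in
  [/\ res_ok res = true,
      (forall w, (w < n_wires C)%N ->
         tshared (wire_values C inp)`_w (nth (wdefault _) (res_states res) w))
    & forall i : 'I_4, res_out res i = circuit_output C inp].
Proof.
exact: run_protocol_correct.
Qed.
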